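(* Let $q,z,m$ be positive integers with $q\geq 2$ and $z<q$, and put $L=\lfloor\frac{q-1}{q-z}\rfloor$. Index rows by $\mathbf{a}=(a_0,\ldots,a_{m-1})\in\mathbb{Z}_q^m$. Define the $q^m\times mLq$ array $\mathbf{P}=(p_{\mathbf{a},(b,\delta,\varepsilon)})$ with columns $(b,\delta,\varepsilon)$, $b\in\mathbb{Z}_q$, $0\leq\delta<m$, $\varepsilon\in\{0,\ldots,L-1\}$, by: $p_{\mathbf{a},(b,\delta,\varepsilon)}=*$ if $a_\delta\in\{b,b-1,\ldots,b-(z-1)\}$, and otherwise $p_{\mathbf{a},(b,\delta,\varepsilon)}=(a_0,\ldots,a_{\delta-1},\,b-\varepsilon(q-z),\,a_{\delta+1},\ldots,a_{m-1},\,a_\delta-b-1)$. Define the $q^m\times q$ array $\mathbf{C}=(c_{\mathbf{a},(b,m)})$ with columns $(b,m)$, $b\in\mathbb{Z}_q$, by: $c_{\mathbf{a},(b,m)}=*$ if $\sum_{l=0}^{m-1}a_l\in\{b,b+1,\ldots,b+(z-1)\}$, and otherwise $c_{\mathbf{a},(b,m)}=(a_0,\ldots,a_{m-1},\,b-\sum_{l=0}^{m-1}a_l-1)$. All arithmetic is modulo $q$. Then $(\mathbf{P},\mathbf{C})$ (the columns of $\mathbf{P}$ followed by those of $\mathbf{C}$) is an $\big((mL+1)q,\ q^m,\ zq^{m-1},\ (q-z)q^m\big)$ placement delivery array. In particular the associated coded caching scheme has $\frac{M}{N}=\frac{z}{q}$ and rate $R=q-z$.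
   Context: A $(K,F,Z,S)$ placement delivery array (PDA) is an $F\times K$ array whose entries are either a special symbol $*$ or one of $S$ distinct non-star symbols (identified with $1,\ldots,S$), such that: (C1) $*$ appears exactly $Z$ times in each column; (C2) each of the $S$ symbols occurs at least once; (C3) for any two distinct entries $p_{j_1,k_1}=p_{j_2,k_2}=s$ with $s$ a non-star symbol, we have $j_1\neq j_2$, $k_1\neq k_2$, and $p_{j_1,k_2}=p_{j_2,k_1}=*$. A $(K,F,Z,S)$ PDA yields an $F$-division coded caching scheme for $K$ users with memory ratio $M/N=Z/F$ and rate $R=S/F$. The non-star symbols here are vectors in $\mathbb{Z}_q^{m+1}$. *)

From HB Require Import structures.
From mathcomp Require Import all_boot all_order all_algebra.
Set Implicit Arguments. Unset Strict Implicit. Unset Printing Implicit Defensive.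
Import GRing.Theory.

(* A (K,F,Z,S) placement delivery array: an F x K array with rows indexed by
   the finite type Row (#|Row| = F), columns indexed by Col (#|Col| = K),
   entries in option Sym where None stands for the star symbol "*". *)
Definition is_PDA (Row Col Sym : finType) (A : Row -> Col -> option Sym)
  (K F Z S : nat) : Prop :=
  [/\ #|Col| = K,
      #|Row| = F,
      (forall c : Col, #|[set r : Row | A r c == None]| = Z),
      #|[set s : Sym | [exists r : Row, exists c : Col, A r c == Some s]]| = S
    &
      (forall (r1 r2 : Row) (c1 c2 : Col) (s : Sym),
         (r1, c1) <> (r2, c2) -> A r1 c1 = Some s -> A r2 c2 = Some s ->
         [/\ r1 <> r2, c1 <> c2, A r1 c2 = None & A r2 c1 = None])].

Local Open Scope ring_scope.

(* Rows: a in Z_q^m.  Symbols: vectors in Z_q^(m+1), written as a pair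
   (first m coordinates, last coordinate). *)
Definition pda_row (q m : nat) := {ffun 'I_m -> 'Z_q}.
Definition pda_sym (q m : nat) := ({ffun 'I_m -> 'Z_q} * 'Z_q)%type.

Definition pda_L (q z : nat) : nat := ((q - 1) %/ (q - z))%N.

(* Columns: inl (b, delta, eps) for the array P, inr b for the array C. *)
Definition pda_col (q z m : nat) :=
  (('Z_q * 'I_m * 'I_(pda_L q z)) + 'Z_q)%type.

Definition arrP (q z m : nat) (a : pda_row q m) (b : 'Z_q) (d : 'I_m)
    (e : 'I_(pda_L q z)) : option (pda_sym q m) :=
  if [exists i : 'I_z, a d == b - (i : nat)%:R] then None
  else Some ([ffun j => if j == d then b - ((e : nat) * (q - z))%:R else a j],
             a d - b - 1).

Definition arrC (q z m : nat) (a : pda_row q m) (b : 'Z_q)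
    : option (pda_sym q m) :=
  let s := \sum_(l < m) a l in
  if [exists i : 'I_z, s == b + (i : nat)%:R] then None
  else Some (a, b - s - 1).

Definition arrPC (q z m : nat) (a : pda_row q m) (c : pda_col q z m)
    : option (pda_sym q m) :=
  match c with
  | inl (b, d, e) => arrP a b d e
  | inr b => arrC z a b
  end.

From mathcomp Require Import all_boot all_order all_algebra.
From mathcomp Require Import ring zify.
Set Implicit Arguments. Unset Strict Implicit. Unset Printing Implicit Defensive.
Import GRing.Theory.
Local Open Scope ring_scope.

(** Each entry has an offset, [b - a_delta] in a column of P and [sum a - b]
  in a column of C: the entry is a star iff the offset lies in {0, ..., z-1},
  and otherwise the last coordinate of its symbol is [- offset - 1].  Hence
  the symbols are the vectors whose last coordinate avoids z residues, and a
  column has as many stars as there are rows with a_delta (resp. sum a) in a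
  fixed set of z residues.  For (C3) it suffices that, for two cells with the
  same symbol, the first row meets the second column in a star.  The shared
  symbol makes the rows agree outside one coordinate, where a column of P
  writes [b - eps (q - z)] with [eps (q - z) < z], so the other row reads the
  star offset [eps (q - z)] there.  Only for two columns of P with the same
  delta does the first row keep its own offset, now moved by the difference
  of two distinct shifts; that difference is at least [q - z] and less than
  z in absolute value, which wraps the offset from [z, q) back below z. *)

Lemma C3_of_cross_stars (Row Col Sym : finType) (A : Row -> Col -> option Sym) :
  (forall r1 r2 c1 c2 s, (r1, c1) <> (r2, c2) ->
     A r1 c1 = Some s -> A r2 c2 = Some s -> A r1 c2 = None) ->
  forall r1 r2 c1 c2 s, (r1, c1) <> (r2, c2) ->
    A r1 c1 = Some s -> A r2 c2 = Some s ->
    [/\ r1 <> r2, c1 <> c2, A r1 c2 = None & A r2 c1 = None].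
Proof.
move=> cross r1 r2 c1 c2 s neq A11 A22.
have A12 := cross _ _ _ _ _ neq A11 A22.
have A21 := cross _ _ _ _ _ (fun e => neq (esym e)) A22 A11.
by split=> // [r12|c12]; move: A12; [rewrite r12 A22 | rewrite -c12 A11].
Qed.

Lemma card_ffun_coord_in (T : finType) (m : nat) (j0 : 'I_m) (S : {set T}) :
  #|[set a : {ffun 'I_m -> T} | a j0 \in S]| = (#|S| * #|T| ^ (m - 1))%N.
Proof.
pose F (j : 'I_m) : pred T := if j == j0 then [in S] else predT.
have -> : [set a : {ffun 'I_m -> T} | a j0 \in S] = [set a in family F].
  apply/setP => a; rewrite !inE; apply/idP/familyP => [Sa j|Fa].
    by rewrite /F; case: eqP => [->|].
  by have := Fa j0; rewrite /F eqxx.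
rewrite cardsE card_family foldrE big_map big_enum (bigD1 j0) //= /F eqxx.
rewrite (eq_bigr (fun _ => #|T|)) => [|j /negbTE ->]; last exact: eq_card.
by rewrite prod_nat_const cardC1 card_ord subn1.
Qed.

Lemma card_ffun_sum_in (V : finZmodType) (m : nat) (j0 : 'I_m) (S : {set V}) :
  #|[set a : {ffun 'I_m -> V} | \sum_(l < m) a l \in S]| =
  (#|S| * #|V| ^ (m - 1))%N.
Proof.
pose f (a : {ffun 'I_m -> V}) := [ffun j => if j == j0 then \sum_l a l else a j].
have f_inj : injective f.
  move=> a b /ffunP fab; apply/ffunP => j.
  have ab_off k : k != j0 -> a k = b k.
    by move=> /negbTE k_j0; have := fab k; rewrite !ffunE k_j0.
  have [->|/ab_off //] := eqVneq j j0.
  have := fab j0; rewrite !ffunE eqxx (bigD1 j0) // [in RHS](bigD1 j0) //=.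
  by rewrite (eq_bigr b) => [/addIr|k /ab_off].
rewrite -(card_ffun_coord_in j0) -[RHS](card_preimset _ f_inj).
by apply: eq_card => a; rewrite !inE ffunE eqxx.
Qed.

Lemma sum_ffun_set (V : zmodType) (m : nat) (a : {ffun 'I_m -> V}) d (x : V) :
  \sum_(l < m) [ffun j => if j == d then x else a j] l =
  \sum_(l < m) a l - a d + x.
Proof.
rewrite (bigD1 d) // [in RHS](bigD1 d) //= ffunE eqxx.
rewrite (eq_bigr a) => [|j /negbTE jd]; last by rewrite ffunE jd.
by rewrite [a d + _]addrC addrK addrC.
Qed.

Section ZpValues.
Variable p : nat.
Local Notation q := p.+2.
Implicit Types x y w : 'I_q.

Lemma Zp_valD x y :
  nat_of_ord (x + y) = if (x + y < q)%N then (x + y)%N else (x + y - q)%N.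
Proof.
rewrite [LHS]/=; case: ltnP => [/modn_small //|le_q].
rewrite -{1}(subnK le_q) modnDr modn_small //.
by have := ltn_ord x; have := ltn_ord y; lia.
Qed.

Lemma Zp_valB x y :
  nat_of_ord (x - y) = if (y <= x)%N then (x - y)%N else (q + x - y)%N.
Proof.
rewrite Zp_valD [nat_of_ord (- y)]/=.
have [->|y_gt0] := posnP y; first by rewrite subn0 modnn addn0 ltn_ord subn0.
have := ltn_ord x; have := ltn_ord y => y_lt x_lt.
by rewrite modn_small; [case: ifP; case: ifP; lia | lia].
Qed.

Lemma Zp_nat_val (n : nat) : (n < q)%N -> nat_of_ord (n%:R : 'Z_q) = n.
Proof. by move=> n_lt; rewrite val_Zp_nat // modn_small. Qed.

Lemma Zp_exists_eq_natr (k : nat) x : (k <= q)%N ->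
  [exists i : 'I_k, x == (i : nat)%:R] = (x < k)%N.
Proof.
move=> k_le; apply/existsP/idP => [[i /eqP ->]|x_lt].
  by rewrite Zp_nat_val ?ltn_ord //; apply: leq_trans (ltn_ord i) k_le.
by exists (Ordinal x_lt); apply/eqP/val_inj; rewrite /= Zp_nat_val.
Qed.

Lemma card_Zp_lt (k : nat) : (k <= q)%N -> #|[set x : 'Z_q | (x < k)%N]| = k.
Proof.
move=> k_le; have widen_inj : injective (widen_ord k_le).
  by move=> i j /(congr1 val) ij; apply: val_inj.
rewrite -[RHS]card_ord -(card_imset _ widen_inj).
apply: eq_card => x; rewrite inE; apply/idP/imsetP => [x_lt|[i _ ->]].
  by exists (Ordinal x_lt); last exact: val_inj.
exact: (ltn_ord i).
Qed.

Lemma Zp_shift_wrap x y w (k : nat) :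
  (k <= x)%N -> (y < k)%N -> (w < k)%N ->
  (y + (q - k) <= w)%N || (w + (q - k) <= y)%N -> ((x + w - y)%R < k)%N.
Proof.
rewrite Zp_valB Zp_valD; have := ltn_ord x.
by case: ifP; case: ifP; lia.
Qed.

End ZpValues.

Section Construction.
Variables p z m : nat.
Local Notation q := p.+2.
Hypothesis z_le_q : (z <= q)%N.
Local Notation L := (pda_L q z).
Local Notation shift e := (((e : nat) * (q - z))%:R : 'Z_q).
Implicit Types (a r : pda_row q m) (b : 'Z_q) (d : 'I_m) (e : 'I_L).

Lemma mul_shift_lt e : ((e : nat) * (q - z) < z)%N.
Proof.
have e1L : ((e : nat).+1 * (q - z) <= L * (q - z))%N.
  by rewrite leq_mul2r ltn_ord orbT.
have := leq_divM (q - 1) (q - z); rewrite /pda_L mulSn in e1L *.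
by move: e1L; move: (_ %/ _ * _)%N (_ * (q - z))%N; lia.
Qed.

Lemma shift_val e : nat_of_ord (shift e) = ((e : nat) * (q - z))%N.
Proof. by rewrite Zp_nat_val // (leq_trans (mul_shift_lt e)). Qed.

Lemma shift_lt e : (shift e < z)%N.
Proof. by rewrite shift_val mul_shift_lt. Qed.

Lemma shift_gap e1 e2 : e1 != e2 ->
  (shift e1 + (q - z) <= shift e2)%N || (shift e2 + (q - z) <= shift e1)%N.
Proof.
rewrite !shift_val -!mulSnr !leq_mul2r.
by case: ltngtP => [||/val_inj ->]; rewrite ?eqxx ?orbT.
Qed.

Lemma arrPE a b d e : arrP a b d e =
  if ((b - a d)%R < z)%N then None
  else Some ([ffun j => if j == d then b - shift e else a j], a d - b - 1).
Proof.
rewrite /arrP -(Zp_exists_eq_natr _ z_le_q); congr (if _ then _ else _).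
by apply: eq_existsb => i; apply/eqP/eqP => [->|<-]; ring.
Qed.

Lemma arrCE a b : arrC z a b =
  if ((\sum_(l < m) a l - b)%R < z)%N then None
  else Some (a, b - \sum_(l < m) a l - 1).
Proof.
rewrite /arrC -(Zp_exists_eq_natr _ z_le_q); congr (if _ then _ else _).
by apply: eq_existsb => i; apply/eqP/eqP => [->|<-]; ring.
Qed.

Lemma arrP_Some a b d e v t : arrP a b d e = Some (v, t) ->
  [/\ (z <= (b - a d)%R)%N, v = [ffun j => if j == d then b - shift e else a j]
    & t = a d - b - 1].
Proof.
by rewrite arrPE; case: ifP => // /negbT; rewrite -leqNgt => off [<- <-].
Qed.

Lemma arrC_Some a b v t : arrC z a b = Some (v, t) ->
  [/\ (z <= (\sum_(l < m) a l - b)%R)%N, v = a & t = b - \sum_(l < m) a l - 1].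
Proof.
by rewrite arrCE; case: ifP => // /negbT; rewrite -leqNgt => off [<- <-].
Qed.

Lemma arrP_shifted_star a b d e : a d = b - shift e -> arrP a b d e = None.
Proof.
move=> ad; rewrite arrPE ad (_ : b - (b - _) = shift e); last by ring.
by rewrite shift_lt.
Qed.

Lemma arrP_same_cell a1 a2 b1 b2 d e s :
  arrP a1 b1 d e = Some s -> arrP a2 b2 d e = Some s -> a1 = a2 /\ b1 = b2.
Proof.
case: s => v t /arrP_Some[_ -> ->] /arrP_Some[_ /ffunP v12 t12].
have := v12 d; rewrite !ffunE eqxx => /addIr b12; subst b2.
have {}t12 : a1 d = a2 d by move/addIr/addIr: t12.
split=> //; apply/ffunP => j; have := v12 j; rewrite !ffunE.
by case: eqP => [->|].
Qed.

Lemma arrP_cross_same_dir a1 a2 b1 b2 d e1 e2 s : e1 != e2 ->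
  arrP a1 b1 d e1 = Some s -> arrP a2 b2 d e2 = Some s -> arrP a1 b2 d e2 = None.
Proof.
case: s => v t e12 /arrP_Some[off1 -> _] /arrP_Some[_ /ffunP v12 _].
have := v12 d; rewrite !ffunE eqxx => b12.
have b2E : b2 - a1 d = b1 - a1 d + shift e2 - shift e1.
  by rewrite -(subrK (shift e2) b2) -b12; ring.
have wrap := Zp_shift_wrap off1 (shift_lt e1) (shift_lt e2) (shift_gap e12).
by rewrite arrPE b2E wrap.
Qed.

Lemma arrP_cross_other_dir a1 a2 b1 b2 d1 d2 e1 e2 s : d1 != d2 ->
  arrP a1 b1 d1 e1 = Some s -> arrP a2 b2 d2 e2 = Some s ->
  arrP a1 b2 d2 e2 = None.
Proof.
case: s => v t /negbTE d12 /arrP_Some[_ -> _] /arrP_Some[_ /ffunP v12 _].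
apply: arrP_shifted_star; have := v12 d2.
by rewrite !ffunE eqxx eq_sym d12.
Qed.

Lemma arrP_arrC_cross a1 a2 b1 b2 d e s :
  arrP a1 b1 d e = Some s -> arrC z a2 b2 = Some s -> arrC z a1 b2 = None.
Proof.
case: s => v t /arrP_Some[_ -> ->] /arrC_Some[_ a2E b2E].
have {}b2E : b2 = a1 d - b1 - 1 + \sum_l a2 l + 1 by rewrite b2E; ring.
have sum_a1 : \sum_l a1 l - b2 = shift e by rewrite b2E -a2E sum_ffun_set; ring.
by rewrite arrCE sum_a1 shift_lt.
Qed.

Lemma arrC_arrP_cross a1 a2 b1 b2 d e s :
  arrC z a1 b1 = Some s -> arrP a2 b2 d e = Some s -> arrP a1 b2 d e = None.
Proof.
case: s => v t /arrC_Some[_ -> _] /arrP_Some[_ a1E _].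
by apply: arrP_shifted_star; rewrite a1E ffunE eqxx.
Qed.

Lemma arrC_same_cell a1 a2 b1 b2 s :
  arrC z a1 b1 = Some s -> arrC z a2 b2 = Some s -> a1 = a2 /\ b1 = b2.
Proof.
case: s => v t /arrC_Some[_ <- ->] /arrC_Some[_ a12 t12]; subst a2.
by split=> //; move/addIr/addIr: t12.
Qed.

Lemma arrPC_cross_star r1 r2 (c1 c2 : pda_col q z m) s : (r1, c1) <> (r2, c2) ->
  arrPC r1 c1 = Some s -> arrPC r2 c2 = Some s -> arrPC r1 c2 = None.
Proof.
case: c1 c2 => [[[b1 d1] e1]|b1] [[[b2 d2] e2]|b2] /= neq A1 A2.
- have [d12|d12] := eqVneq d1 d2; last exact: arrP_cross_other_dir d12 A1 A2.
  have [e12|e12] := eqVneq e1 e2.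
    by subst d2 e2; have [r12 b12] := arrP_same_cell A1 A2; subst.
  by subst d2; exact: arrP_cross_same_dir e12 A1 A2.
- exact: arrP_arrC_cross A1 A2.
- exact: arrC_arrP_cross A1 A2.
- by have [r12 b12] := arrC_same_cell A1 A2; subst.
Qed.

Lemma arrPC_symbol_offset r (c : pda_col q z m) v (t : 'Z_q) :
  arrPC r c = Some (v, t) -> (z <= (- t - 1)%R)%N.
Proof.
case: c => [[[b d] e]|b]; [move/arrP_Some | move/arrC_Some] => -[off _ ->].
  by have -> : - (r d - b - 1) - 1 = b - r d by ring.
by have -> : - (b - \sum_l r l - 1) - 1 = \sum_l r l - b by ring.
Qed.

Lemma arrC_symbol v (t : 'Z_q) : (z <= (- t - 1)%R)%N ->
  arrC z v (t + \sum_(l < m) v l + 1) = Some (v, t).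
Proof.
move=> off; rewrite arrCE (_ : _ - (_ + 1) = - t - 1); last by ring.
by rewrite ltnNge off; congr (Some (_, _)); ring.
Qed.

Lemma card_arrP_stars b d e :
  #|[set a : pda_row q m | arrP a b d e == None]| = (z * q ^ (m - 1))%N.
Proof.
have sub_inj : injective (fun x : 'Z_q => b - x) by move=> x y /addrI/oppr_inj.
transitivity #|[set a : pda_row q m |
                a d \in (fun x => b - x) @^-1: [set x : 'Z_q | (x < z)%N]]|.
  by apply: eq_card => a; rewrite !inE arrPE; case: ifP.
rewrite card_ffun_coord_in (card_preimset _ sub_inj).
by rewrite (card_Zp_lt z_le_q) card_ord.
Qed.

Lemma card_arrC_stars b : (0 < m)%N ->
  #|[set a : pda_row q m | arrC z a b == None]| = (z * q ^ (m - 1))%N.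
Proof.
move=> m_gt0.
have sub_inj : injective (fun x : 'Z_q => x - b) by move=> x y /addIr.
transitivity #|[set a : pda_row q m |
          \sum_l a l \in (fun x => x - b) @^-1: [set x : 'Z_q | (x < z)%N]]|.
  by apply: eq_card => a; rewrite !inE arrCE; case: ifP.
rewrite (card_ffun_sum_in (Ordinal m_gt0)) (card_preimset _ sub_inj).
by rewrite (card_Zp_lt z_le_q) card_ord.
Qed.

Lemma card_arrPC_symbols :
  #|[set s : pda_sym q m | [exists r : pda_row q m,
                            exists c : pda_col q z m, arrPC r c == Some s]]| =
  ((q - z) * q ^ m)%N.
Proof.
have off_inj : injective (fun t : 'Z_q => - t - 1) by move=> x y /addIr/oppr_inj.
set stars := (fun t => - t - 1) @^-1: [set x : 'Z_q | (x < z)%N].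
have -> : [set s : pda_sym q m | [exists r : pda_row q m,
                                  exists c : pda_col q z m, arrPC r c == Some s]] =
          setX [set: pda_row q m] (~: stars).
  apply/setP => -[v t]; rewrite !inE -leqNgt; apply/existsP/idP.
    by case=> r /existsP[c /eqP/arrPC_symbol_offset].
  move=> off; exists v; apply/existsP; exists (inr (t + \sum_l v l + 1)).
  by apply/eqP; apply: arrC_symbol.
have card_nonstars : #|~: stars| = (q - z)%N.
  by rewrite cardsCs setCK (card_preimset _ off_inj) (card_Zp_lt z_le_q) card_ord.
by rewrite cardsX cardsT card_ffun !card_ord card_nonstars mulnC.
Qed.

End Construction.

Theorem theorem5 (q z m : nat) :
  (2 <= q)%N -> (0 < z)%N -> (z < q)%N -> (0 < m)%N ->
  is_PDA (@arrPC q z m)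
    ((m * pda_L q z + 1) * q) (q ^ m) (z * q ^ (m - 1)) ((q - z) * q ^ m).
Proof.
case: q => [|[|p]] // _ _ /ltnW z_le_q m_gt0; split.
- by rewrite card_sum !card_prod !card_ord -[(Zp_trunc _).+2]/(p.+2); ring.
- by rewrite card_ffun !card_ord.
- case=> [[[b d] e]|b]; first exact: card_arrP_stars.
  exact: card_arrC_stars.
- exact: card_arrPC_symbols.
- exact: C3_of_cross_stars (@arrPC_cross_star p z m z_le_q).
Qed.
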